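(* In the setting below, suppose that the function $x\mapsto f(x)+g(Ax)$ is bounded below on $\mathbb R^n$ (equivalently, $F(x)=f(x)+g(Ax)+\Phi_{+,\lambda}(Bx-b)$ is bounded below) and that $\{x:\ x\in\operatorname{ri}(\operatorname{dom}f),\ Ax\in\operatorname{ri}(\operatorname{dom}g),\ Bx\le b\}\neq\emptyset$, where ''$\operatorname{ri}$'' may be omitted for $f$ (resp. $g$) if $f$ (resp. $g$) is polyhedral. Then for every $\mu>0$ the problem $\inf_{w=[y;z]}\ \Xi(w)+\Psi_{+,\mu}(z)$ has a global minimizer.
   Context: Let $f:\mathbb R^n\to(-\infty,\infty]$ and $g:\mathbb R^m\to(-\infty,\infty]$ be proper, lsc and convex, with convex conjugates $f^*(q)=\sup_x\{\langle q,x\rangle-f(x)\}$, $g^*$. Let $A\in\mathbb R^{m\times n}$, $B\in\mathbb R^{r\times n}$, $b\in\mathbb R^r$, $\lambda,\mu\in\mathbb R^r$ with $\lambda,\mu>0$. $\Phi_{+,\lambda}(u)=\sum_i\lambda_i\mathbf 1_{\{u_i>0\}}$. For $w=[y;z]\in\mathbb R^m\times\mathbb R^r$, $\Xi(w):=f^*(-A^\top y-B^\top z)+g^*(y)+\langle b,z\rangle$. $\Psi_{+,\mu}(z)=\sum_{i=1}^r\mu_i\mathbf 1_{\{z_i\ne0\}}+\delta(z\mid\mathbb R^r_+)$. $\operatorname{ri}$ denotes relative interior. *)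

From HB Require Import structures.
From mathcomp Require Import all_boot all_order all_algebra.
From mathcomp Require Import all_classical all_reals all_analysis.
Set Implicit Arguments. Unset Strict Implicit. Unset Printing Implicit Defensive.
Import Order.TTheory GRing.Theory Num.Theory.
Import numFieldNormedType.Exports.
Local Open Scope classical_set_scope.
Local Open Scope ring_scope.

Section ConvexDefs.
Context {R : realType}.

Definition dotv {n : nat} (u v : 'cV[R]_n) : R := \sum_(i < n) u i 0 * v i 0.

Definition edom {n : nat} (f : 'cV[R]_n -> \bar R) : set 'cV[R]_n :=
  [set x | (f x < +oo)%E].

Definition proper_fun {n : nat} (f : 'cV[R]_n -> \bar R) : Prop :=
  (forall x, f x != -oo%E) /\ (exists x, (f x < +oo)%E).

Definition convex_efun {n : nat} (f : 'cV[R]_n -> \bar R) : Prop :=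
  forall (x y : 'cV[R]_n) (t : R), 0 < t < 1 ->
    (f ((1 - t) *: x + t *: y)%R <= (1 - t)%:E * f x + t%:E * f y)%E.

Definition plsc_convex {n : nat} (f : 'cV[R]_n -> \bar R) : Prop :=
  [/\ proper_fun f, lower_semicontinuous f & convex_efun f].

Definition conj_fun {n : nat} (f : 'cV[R]_n -> \bar R) (q : 'cV[R]_n) : \bar R :=
  ereal_sup [set ((dotv q x)%:E - f x)%E | x in [set: 'cV[R]_n]].

Definition aff_hull {n : nat} (C : set 'cV[R]_n) : set 'cV[R]_n :=
  [set y | exists (k : nat) (a : 'I_k -> R) (p : 'I_k -> 'cV[R]_n),
     [/\ forall i, C (p i), \sum_(i < k) a i = 1 & y = \sum_(i < k) a i *: p i]].

Definition rel_int {n : nat} (C : set 'cV[R]_n) : set 'cV[R]_n :=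
  [set x | C x /\ exists2 e : R, 0 < e &
     forall y, aff_hull C y -> dotv (y - x) (y - x) < e ^+ 2 -> C y].

(* polyhedral convex function: its epigraph {(x,t) | f x <= t} is a polyhedral
   set, i.e. the intersection of finitely many closed half-spaces of R^n x R *)
Definition polyhedral_fun {n : nat} (f : 'cV[R]_n -> \bar R) : Prop :=
  exists (k : nat) (Cm : 'M[R]_(k, n)) (e d : 'cV[R]_k),
    forall (x : 'cV[R]_n) (t : R),
      (f x <= t%:E)%E <-> (forall i, (Cm *m x) i 0 + e i 0 * t <= d i 0).

Definition ind_nonneg {r : nat} (z : 'cV[R]_r) : \bar R :=
  if `[< forall i, 0 <= z i 0 >] then 0%E else +oo%E.

Definition Psi_plus {r : nat} (mu : 'cV[R]_r) (z : 'cV[R]_r) : \bar R :=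
  ((\sum_(i < r) (if z i 0 != 0 then mu i 0 else 0))%:E + ind_nonneg z)%E.

Definition Xi {n m r : nat} (f : 'cV[R]_n -> \bar R) (g : 'cV[R]_m -> \bar R)
  (A : 'M[R]_(m, n)) (B : 'M[R]_(r, n)) (b : 'cV[R]_r)
  (y : 'cV[R]_m) (z : 'cV[R]_r) : \bar R :=
  (conj_fun f (- (A^T *m y) - B^T *m z)%R + conj_fun g y + (dotv b z)%:E)%E.

End ConvexDefs.

From HB Require Import structures.
From mathcomp Require Import all_boot all_order all_algebra.
From mathcomp Require Import all_classical all_reals all_analysis.
From mathcomp Require Import ring lra zify.
Import Order.TTheory GRing.Theory Num.Theory.
Local Open Scope classical_set_scope.
Local Open Scope ring_scope.
Set Implicit Arguments. Unset Strict Implicit. Unset Printing Implicit Defensive.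

(* Put [u = A x].  Minimising [f x + g u] under [u = A x] and the rows [i \in S]
   of [B x <= b] is a convex program with finitely many affine constraints, and
   the qualification hypothesis gives a point in the relative interior of the
   domain of its objective (a polyhedral [f] is first traded for the height [t]
   on its epigraph, whose defining inequalities join the constraints).  For such
   programs Lagrange multipliers exist, by induction on the constraints: each step
   is a separation on a line, the multiplier of [e] being a supremum of slopes of
   the objective across the hyperplane [e = 0].  Multipliers [(y, z)] for [S] give
   [Xi y z <= - p_S], where [p_S] is the infimum of the restricted problem and
   [z >= 0] is supported on [S], while weak duality gives [Xi y z >= - p_(supp z)]
   for every [z >= 0].  Hence if [S0] minimises [- p_S + \sum_(i in S) mu_i] over
   the finitely many [S], its multipliers minimise [Xi + Psi_{+,mu}]. *)

(** * Lagrange multipliers for affine constraints *)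

Section ConvexCombinationSpace.
Variables (R : realType) (V : Type) (cmb : R -> V -> V -> V).
(* [cmb t x y] stands for [(1 - t) x + t y], also for [t] outside [[0, 1]]. *)

Definition affine_fun (c : V -> R) :=
  forall t x y, c (cmb t x y) = (1 - t) * c x + t * c y.

Definition all_affine (E : seq (V -> R)) := forall c, List.In c E -> affine_fun c.

Definition convex_on_dom (phi : V -> \bar R) :=
  forall t x y a b, 0 < t < 1 -> phi x = a%:E -> phi y = b%:E ->
    (phi (cmb t x y) <= ((1 - t) * a + t * b)%:E)%E.

(* [ri_convex_ext] makes [w0] a relative interior point of the domain: every
   segment from a point of the domain to [w0] can be prolonged beyond [w0]. *)
Record ri_convex (phi : V -> \bar R) (w0 : V) : Prop := RiConvex {
  ri_convex_cvx : convex_on_dom phi;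
  ri_convex_nNy : forall w, phi w != -oo%E;
  ri_convex_dom : (phi w0 < +oo)%E;
  ri_convex_ext : forall w, (phi w < +oo)%E -> exists2 e : R, 0 < e &
    forall e', 0 < e' <= e -> (phi (cmb (- e') w0 w) < +oo)%E }.

Definition feasible (E S : seq (V -> R)) (w : V) :=
  (forall c, List.In c E -> c w = 0) /\ (forall c, List.In c S -> c w <= 0).

Inductive lagrange_comb (E S : seq (V -> R)) : (V -> R) -> Prop :=
| lagrange_comb0 : lagrange_comb E S (fun _ => 0)
| lagrange_combE c a h : List.In c E -> lagrange_comb E S h ->
    lagrange_comb E S (fun w => a * c w + h w)
| lagrange_combS c a h : List.In c S -> 0 <= a -> lagrange_comb E S h ->
    lagrange_comb E S (fun w => a * c w + h w).

Definition has_multipliers (E S : seq (V -> R)) := forall phi w0 p,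
  ri_convex phi w0 -> feasible E S w0 -> (forall w, feasible E S w -> (p%:E <= phi w)%E) ->
  exists2 h, lagrange_comb E S h & forall w, (p%:E <= phi w + (h w)%:E)%E.

Lemma eq_lagrange_comb E S h h' : lagrange_comb E S h -> h =1 h' -> lagrange_comb E S h'.
Proof. by move=> Hh /funext <-. Qed.

Lemma lagrange_combD E S h1 h2 : lagrange_comb E S h1 -> lagrange_comb E S h2 ->
  lagrange_comb E S (fun w => h1 w + h2 w).
Proof.
elim=> [|c a h Hc _ IH|c a h Hc Ha _ IH] H2.
- by apply: eq_lagrange_comb H2 _ => w; rewrite add0r.
- by apply: eq_lagrange_comb (lagrange_combE a Hc (IH H2)) _ => w; rewrite addrA.
- by apply: eq_lagrange_comb (lagrange_combS Hc Ha (IH H2)) _ => w; rewrite addrA.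
Qed.

Lemma lagrange_combZ E S h k : 0 <= k -> lagrange_comb E S h ->
  lagrange_comb E S (fun w => k * h w).
Proof.
move=> k0; elim=> [|c a h' Hc _ IH|c a h' Hc Ha _ IH].
- by apply: eq_lagrange_comb (lagrange_comb0 _ _) _ => w; rewrite mulr0.
- apply: eq_lagrange_comb (lagrange_combE (k * a) Hc IH) _ => w.
  by rewrite mulrDr mulrA.
- apply: eq_lagrange_comb (lagrange_combS Hc (mulr_ge0 k0 Ha) IH) _ => w.
  by rewrite mulrDr mulrA.
Qed.

Lemma lagrange_comb_sub E S E' S' h :
  (forall c, List.In c E -> List.In c E') -> (forall c, List.In c S -> List.In c S') ->
  lagrange_comb E S h -> lagrange_comb E' S' h.
Proof.
move=> sEE' sSS'; elim=> [|c a h' Hc _ IH|c a h' Hc Ha _ IH].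
- exact: lagrange_comb0.
- exact: lagrange_combE (sEE' _ Hc) IH.
- exact: lagrange_combS (sSS' _ Hc) Ha IH.
Qed.

Lemma lagrange_comb_cons c E S h : lagrange_comb (c :: E) S h ->
  exists eta, exists2 h', lagrange_comb E S h' & h = (fun w => eta * c w + h' w).
Proof.
elim=> [|c' a h' Hc _ [eta [h'' H1 ->]]|c' a h' Hc Ha _ [eta [h'' H1 ->]]].
- exists 0, (fun _ => 0); first exact: lagrange_comb0.
  by apply: funext => w; rewrite mul0r addr0.
- case: Hc => [<-|Hc].
    by exists (a + eta), h'' => //; apply: funext => w; rewrite mulrDl addrA.
  exists eta, (fun w => a * c' w + h'' w); first exact: lagrange_combE.
  by apply: funext => w; rewrite addrCA.
- exists eta, (fun w => a * c' w + h'' w); first exact: lagrange_combS.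
  by apply: funext => w; rewrite addrCA.
Qed.

Lemma affine_funZ a c : affine_fun c -> affine_fun (fun w => a * c w).
Proof. by move=> Hc t x y; rewrite Hc; ring. Qed.

Lemma feasible_consE e E S w :
  feasible (e :: E) S w <-> feasible E S w /\ e w = 0.
Proof.
split=> [[FE FS]|[[FE FS] ew]]; last by split=> // c [<-|Hc] //; apply: FE.
by split; [split=> // c Hc; apply: FE; right|apply: FE; left].
Qed.

Lemma feasible_consS s E S w :
  feasible E (s :: S) w <-> feasible E S w /\ s w <= 0.
Proof.
split=> [[FE FS]|[[FE FS] sw]]; last by split=> // c [<-|Hc] //; apply: FS.
by split; [split=> // c Hc; apply: FS; right|apply: FS; left].
Qed.

Lemma feasible_cmb E S t x y : all_affine E -> all_affine S -> 0 < t < 1 ->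
  feasible E S x -> feasible E S y -> feasible E S (cmb t x y).
Proof.
move=> HE HS /andP[t0 t1] [Ex Sx] [Ey Sy]; split=> c Hc.
  by rewrite HE // Ex // Ey // !mulr0 addr0.
have := Sx c Hc; have := Sy c Hc; rewrite HS //; nra.
Qed.

Section LineSeparation.
Variables (X : V -> Prop) (psi e : V -> R).
Hypothesis convX : forall t x y, 0 < t < 1 -> X x -> X y ->
  X (cmb t x y) /\ psi (cmb t x y) <= (1 - t) * psi x + t * psi y.
Hypothesis affine_e : affine_fun e.

Lemma line_separation_slope p : (forall w, X w -> e w = 0 -> p <= psi w) ->
  forall w w', X w -> 0 < e w -> X w' -> e w' < 0 ->
  (p - psi w) / e w <= (psi w' - p) / (- e w').
Proof.
move=> H0 w w' Xw ew Xw' ew'.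
set a := e w; set b := - e w'; have b0 : 0 < b by rewrite oppr_gt0.
have s0 : 0 < a + b by rewrite addr_gt0.
(* the point of the segment [w, w'] on the hyperplane e = 0 *)
set t := a / (a + b).
have t01 : 0 < t < 1 by rewrite divr_gt0 //= ltr_pdivrMr // mul1r ltrDl.
have [Xz psi_z] := convX t01 Xw Xw'.
have ez : e (cmb t w w') = 0.
  by rewrite affine_e -/a -[e w']opprK -/b /t; field; rewrite gt_eqF.
have := le_trans (H0 _ Xz ez) psi_z.
rewrite -(ler_pM2r s0) (_ : (_ + _) * (a + b) = b * psi w + a * psi w'); last first.
  by rewrite /t; field; rewrite gt_eqF.
by rewrite ler_pdivrMr // mulrAC ler_pdivlMr //; nra.
Qed.

(* The multiplier is the supremum of the slopes on the side e > 0, which every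
   slope on the side e < 0 bounds from above. *)
Lemma line_separation p : (forall w, X w -> e w = 0 -> p <= psi w) ->
  (exists w, X w /\ 0 < e w) -> (exists w, X w /\ e w < 0) ->
  exists a, forall w, X w -> p <= psi w + a * e w.
Proof.
move=> H0 [w1 [Xw1 ew1]] [w2 [Xw2 ew2]].
pose L := [set (p - psi w) / e w | w in [set w | X w /\ 0 < e w]].
have Lne : L !=set0 by exists ((p - psi w1) / e w1), w1; first split.
have Lub : has_ubound L.
  by exists ((psi w2 - p) / (- e w2)) => _ [w [Xw ew] <-]; apply: line_separation_slope.
exists (sup L) => w Xw.
have [ew|ew|ew] := ltgtP (e w) 0; last by rewrite ew mulr0 addr0; apply: H0.
- have : sup L <= (psi w - p) / (- e w).
    by apply: ge_sup Lne _ => _ [w' [Xw' ew'] <-]; apply: line_separation_slope.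
  by rewrite ler_pdivlMr ?oppr_gt0 //; nra.
- have : (p - psi w) / e w <= sup L by apply: (ub_le_sup Lub); exists w.
  by rewrite ler_pdivrMr //; nra.
Qed.

Lemma line_separation_sym p : (forall w, X w -> e w = 0 -> p <= psi w) ->
  (forall w, X w -> exists2 w', X w' & exists2 k, 0 < k & e w' = - k * e w) ->
  exists a, forall w, X w -> p <= psi w + a * e w.
Proof.
move=> H0 sym.
have [[w [Xw ew]]|nopos] := pselect (exists w, X w /\ 0 < e w).
  apply: line_separation => //; first by exists w.
  have [w' Xw' [k k0 ew']] := sym w Xw; exists w'; split=> //.
  by rewrite ew' mulNr oppr_lt0 mulr_gt0.
have [[w [Xw ew]]|noneg] := pselect (exists w, X w /\ e w < 0).
  apply: line_separation => //; last by exists w.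
  have [w' Xw' [k k0 ew']] := sym w Xw; exists w'; split=> //.
  by rewrite ew' mulNr -mulrN mulr_gt0 // oppr_gt0.
exists 0 => w Xw; rewrite mul0r addr0; apply: H0 => //.
have [ew|ew|//] := ltgtP (e w) 0; [case: noneg|case: nopos]; by exists w.
Qed.

Lemma line_separation_nonneg p : (forall w, X w -> e w <= 0 -> p <= psi w) ->
  (exists w, X w /\ e w < 0) ->
  exists2 l, 0 <= l & forall w, X w -> p <= psi w + l * e w.
Proof.
move=> H0 neg.
have [[w [Xw ew]]|nopos] := pselect (exists w, X w /\ 0 < e w); last first.
  exists 0 => // w Xw; rewrite mul0r addr0; apply: H0 => //.
  by rewrite leNgt; apply/negP => ew; apply: nopos; exists w.
have H0eq v : X v -> e v = 0 -> p <= psi v by move=> Xv ev; apply: H0; rewrite ?ev.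
have [a Ha] := line_separation H0eq (ex_intro _ w (conj Xw ew)) neg.
have [a0|a0] := leP 0 a; first by exists a.
exists 0 => // v Xv; rewrite mul0r addr0.
have [ev|ev] := leP (e v) 0; first exact: H0.
by apply: le_trans (Ha v Xv) _; rewrite gerDl ltW // nmulr_rlt0.
Qed.

End LineSeparation.

Lemma ri_convex_fineK phi w0 w : ri_convex phi w0 -> (phi w < +oo)%E ->
  (fine (phi w))%:E = phi w.
Proof. by case=> _ /(_ w); case: (phi w). Qed.

Lemma ri_convex_cmb phi w0 t x y : ri_convex phi w0 -> 0 < t < 1 ->
  (phi x < +oo)%E -> (phi y < +oo)%E ->
  (phi (cmb t x y) < +oo)%E /\
  fine (phi (cmb t x y)) <= (1 - t) * fine (phi x) + t * fine (phi y).
Proof.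
move=> Hphi t01 Px Py.
have := ri_convex_cvx Hphi t01 (esym (ri_convex_fineK Hphi Px))
  (esym (ri_convex_fineK Hphi Py)).
by have := ri_convex_nNy Hphi (cmb t x y); case: (phi _) => [v| |] //= _; rewrite ltry.
Qed.

Lemma ri_convex_feasible E S phi w0 : all_affine E -> all_affine S -> ri_convex phi w0 ->
  forall t x y, 0 < t < 1 ->
    feasible E S x /\ (phi x < +oo)%E -> feasible E S y /\ (phi y < +oo)%E ->
    (feasible E S (cmb t x y) /\ (phi (cmb t x y) < +oo)%E) /\
    fine (phi (cmb t x y)) <= (1 - t) * fine (phi x) + t * fine (phi y).
Proof.
move=> HE HS Hphi t x y t01 [Fx Px] [Fy Py].
have [Pxy cvx] := ri_convex_cmb Hphi t01 Px Py.
by split=> //; split=> //; apply: feasible_cmb.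
Qed.

Lemma ltey_add_fin (x : \bar R) (a : R) : (x + a%:E < +oo)%E = (x < +oo)%E.
Proof. by case: x => [r| |] //=; rewrite !ltry. Qed.

Lemma ri_convex_tilt phi w0 c : affine_fun c -> ri_convex phi w0 ->
  ri_convex (fun w => phi w + (c w)%:E)%E w0.
Proof.
move=> Hc [cvx nNy dom0 ext]; split=> [t x y a b t01|w||w].
- case Ex: (phi x) => [u| |] //; case Ey: (phi y) => [u'| |] // [<-] [<-].
  have := cvx t x y u u' t01 Ex Ey; have := nNy (cmb t x y).
  case: (phi (cmb t x y)) => [v| |] //= _; rewrite -EFinD !lee_fin Hc => Hv.
  by rewrite (_ : _ + _ = ((1 - t) * u + t * u') + ((1 - t) * c x + t * c y)) ?lerD2r //; ring.
- by have := nNy w; case: (phi w).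
- by rewrite ltey_add_fin.
- by rewrite ltey_add_fin => /ext [e e0 He]; exists e => // e' /He; rewrite ltey_add_fin.
Qed.

Definition restrict_dom (phi : V -> \bar R) (s : V -> R) (w : V) : \bar R :=
  if (phi w < +oo)%E then (s w)%:E else +oo%E.

Lemma ri_convex_restrict phi w0 s : affine_fun s -> ri_convex phi w0 ->
  ri_convex (restrict_dom phi s) w0.
Proof.
rewrite /restrict_dom => Hs Hphi; split=> [t x y a b t01|w||w].
- case: ifP => // Px; case: ifP => // Py [<-] [<-].
  by rewrite (proj1 (ri_convex_cmb Hphi t01 Px Py)) Hs.
- by case: ifP.
- by rewrite (ri_convex_dom Hphi) ltry.
- by case: ifP => // /(ri_convex_ext Hphi) [e e0 He] _; exists e => // e' /He ->; rewrite ltry.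
Qed.

Lemma multipliers_tilt E S phi w0 p c : has_multipliers E S -> affine_fun c ->
  ri_convex phi w0 -> feasible E S w0 ->
  (forall w, feasible E S w /\ (phi w < +oo)%E -> p <= fine (phi w) + c w) ->
  exists2 h, lagrange_comb E S h & forall w, (p%:E <= phi w + (c w + h w)%:E)%E.
Proof.
move=> IH Hc Hphi Fw0 Hp.
have [|h Hh Hph] := IH _ w0 p (ri_convex_tilt Hc Hphi) Fw0.
  move=> w Fw; have [Pw|] := ltP (phi w) +oo%E.
    by rewrite -(ri_convex_fineK Hphi Pw) -EFinD lee_fin; apply: Hp.
  by rewrite leye_eq => /eqP ->; rewrite /= leey.
by exists h => // w; rewrite EFinD addeA.
Qed.

Lemma has_multipliers_nil : has_multipliers [::] [::].
Proof.
move=> phi w0 p _ _ Hp; exists (fun _ => 0); first exact: lagrange_comb0.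
by move=> w; rewrite adde0; apply: Hp.
Qed.

(* Reflection through [w0], where [e] vanishes, shows that [e] takes both signs
   on the feasible domain unless it vanishes there. *)
Lemma has_multipliers_cons_eq e E : affine_fun e -> all_affine E ->
  has_multipliers E [::] -> has_multipliers (e :: E) [::].
Proof.
move=> He HE IH phi w0 p Hphi /feasible_consE[Fw0 ew0] Hp.
have [a Ha] : exists a, forall w, feasible E [::] w /\ (phi w < +oo)%E ->
    p <= fine (phi w) + a * e w.
  apply: (line_separation_sym (X := fun w => feasible E [::] w /\ (phi w < +oo)%E)
    (psi := fun w => fine (phi w)) (ri_convex_feasible HE _ Hphi) He) => //
    [w [Fw Pw] ew|w [Fw Pw]].
    by rewrite -lee_fin (ri_convex_fineK Hphi Pw); apply/Hp/feasible_consE.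
  have [k k0 Hk] := ri_convex_ext Hphi Pw.
  exists (cmb (- k) w0 w); last by exists k => //; rewrite He ew0 mulr0 add0r.
  split; last by apply: Hk; rewrite k0 lexx.
  split=> // c Hc; by rewrite HE // (proj1 Fw0) // (proj1 Fw) // !mulr0 addr0.
have [h Hh Hph] := multipliers_tilt IH (affine_funZ a He) Hphi Fw0 Ha.
exists (fun w => a * e w + h w) => //.
by apply: lagrange_combE; [left|apply: lagrange_comb_sub Hh => // c; right].
Qed.

Lemma multipliers_cons_slack s E S phi w0 p : affine_fun s -> all_affine E -> all_affine S ->
  has_multipliers E S -> ri_convex phi w0 -> feasible E (s :: S) w0 ->
  (forall w, feasible E (s :: S) w -> (p%:E <= phi w)%E) ->
  (exists w, feasible E S w /\ (phi w < +oo)%E /\ s w < 0) ->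
  exists2 h, lagrange_comb E (s :: S) h & forall w, (p%:E <= phi w + (h w)%:E)%E.
Proof.
move=> Hs HE HS IH Hphi /feasible_consS[Fw0 _] Hp [w1 [Fw1 [Pw1 sw1]]].
have [l l0 Hl] : exists2 l, 0 <= l & forall w, feasible E S w /\ (phi w < +oo)%E ->
    p <= fine (phi w) + l * s w.
  apply: (line_separation_nonneg (X := fun w => feasible E S w /\ (phi w < +oo)%E)
    (psi := fun w => fine (phi w)) (ri_convex_feasible HE HS Hphi) Hs).
    move=> w [Fw Pw] sw; rewrite -lee_fin (ri_convex_fineK Hphi Pw).
    exact/Hp/feasible_consS.
  by exists w1.
have [h Hh Hph] := multipliers_tilt IH (affine_funZ l Hs) Hphi Fw0 Hl.
exists (fun w => l * s w + h w) => //.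
by apply: lagrange_combS l0 _; [left|apply: lagrange_comb_sub Hh => // c; right].
Qed.

(* With [s] treated as an equality the multiplier [eta] may be negative; it is
   then absorbed by a certificate [h2] of [0 <= s] on the feasible domain. *)
Lemma multipliers_cons_active s E S phi w0 p : affine_fun s ->
  has_multipliers E S -> has_multipliers (s :: E) S ->
  ri_convex phi w0 -> feasible E (s :: S) w0 ->
  (forall w, feasible E (s :: S) w -> (p%:E <= phi w)%E) ->
  (forall w, feasible E S w -> (phi w < +oo)%E -> 0 <= s w) ->
  exists2 h, lagrange_comb E (s :: S) h & forall w, (p%:E <= phi w + (h w)%:E)%E.
Proof.
move=> Hs IHS IHE Hphi /feasible_consS[Fw0 sw0] Hp s_ge0.
have s0 : s w0 = 0 by apply/eqP; rewrite eq_le sw0 s_ge0 // ri_convex_dom.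
have Fw0E : feasible (s :: E) S w0 by apply/feasible_consE.
have HpE w : feasible (s :: E) S w -> (p%:E <= phi w)%E.
  by case/feasible_consE => Fw sw; apply/Hp/feasible_consS; rewrite sw.
have [h1 /lagrange_comb_cons[eta [h1' Hh1' ->]] Hph1] := IHE phi w0 p Hphi Fw0E HpE.
have [|h2 Hh2 Hph2] := IHS (restrict_dom phi s) w0 0 (ri_convex_restrict Hs Hphi) Fw0.
  by move=> w Fw; rewrite /restrict_dom; case: ifP => [Pw|_]; rewrite ?leey ?lee_fin ?s_ge0.
have sub h : lagrange_comb E S h -> lagrange_comb E (s :: S) h.
  by apply: lagrange_comb_sub => // c; right.
have [eta0|eta0] := leP 0 eta.
  exists (fun w => eta * s w + h1' w); first by apply: lagrange_combS eta0 (sub _ Hh1'); left.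
  exact: Hph1.
exists (fun w => h1' w + (- eta) * h2 w).
  by apply: lagrange_combD (sub _ Hh1') (lagrange_combZ _ (sub _ Hh2)); rewrite oppr_ge0 ltW.
move=> w; have := Hph1 w; have := Hph2 w; rewrite /restrict_dom.
case: (phi w) (ri_convex_nNy Hphi w) => [v| |] //= _; rewrite ?ltry -!EFinD !lee_fin; nra.
Qed.

Lemma has_multipliers_cons_ineq s E S : affine_fun s -> all_affine E -> all_affine S ->
  has_multipliers E S -> has_multipliers (s :: E) S -> has_multipliers E (s :: S).
Proof.
move=> Hs HE HS IHS IHE phi w0 p Hphi Fw0 Hp.
have [slack|active] := pselect (exists w, feasible E S w /\ (phi w < +oo)%E /\ s w < 0).
  exact: (multipliers_cons_slack Hs HE HS IHS Hphi Fw0 Hp slack).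
apply: (multipliers_cons_active Hs IHS IHE Hphi Fw0 Hp) => w Fw Pw.
by rewrite leNgt; apply/negP => sw; apply: active; exists w.
Qed.

(* Turning an inequality into an equality decreases [size E + 2 * size S]. *)
Theorem has_multipliers_affine E S : all_affine E -> all_affine S -> has_multipliers E S.
Proof.
move: {2}(size E + 2 * size S)%N (leqnn (size E + 2 * size S)) => k.
elim: k E S => [|k IH] E S.
  by case: E => //; case: S => // _ _ _; apply: has_multipliers_nil.
case: S => [|s S] /= Hk HE HS.
  case: E HE Hk => [|e E] HE Hk; first exact: has_multipliers_nil.
  have HE' : all_affine E by move=> c Hc; apply: HE; right.
  apply: has_multipliers_cons_eq (HE e (or_introl erefl)) HE' (IH _ _ _ HE' HS).
  by move: Hk => /=; lia.
have HS' : all_affine S by move=> c Hc; apply: HS; right.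
have HsE : all_affine (s :: E) by move=> c [<-|Hc]; [apply: HS; left|apply: HE].
apply: has_multipliers_cons_ineq (HS s (or_introl erefl)) HE HS' (IH _ _ _ HE HS')
  (IH _ _ _ HsE HS'); rewrite /=; lia.
Qed.

End ConvexCombinationSpace.

Section ProductSpace.
Variables (R : realType) (V1 V2 : Type).
Variables (cmb1 : R -> V1 -> V1 -> V1) (cmb2 : R -> V2 -> V2 -> V2).

Definition pair_cmb (t : R) (w w' : V1 * V2) : V1 * V2 :=
  (cmb1 t w.1 w'.1, cmb2 t w.2 w'.2).

Lemma affine_fun_fst c : affine_fun cmb1 c -> affine_fun pair_cmb (fun w => c w.1).
Proof. by move=> Hc t w w'; apply: Hc. Qed.

Lemma affine_fun_snd c : affine_fun cmb2 c -> affine_fun pair_cmb (fun w => c w.2).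
Proof. by move=> Hc t w w'; apply: Hc. Qed.

Lemma ri_convex_pair F G w1 w2 : ri_convex cmb1 F w1 -> ri_convex cmb2 G w2 ->
  ri_convex pair_cmb (fun w => F w.1 + G w.2)%E (w1, w2).
Proof.
move=> HF HG; split=> [t [x1 x2] [y1 y2] a b t01 /= Exy1 Exy2|w|/=|[v1 v2] /=].
- move: Exy1 Exy2.
  case Ex1: (F x1) (ri_convex_nNy HF x1) => [a1| |] // _;
  case Ex2: (G x2) (ri_convex_nNy HG x2) => [a2| |] // _;
  case Ey1: (F y1) (ri_convex_nNy HF y1) => [b1| |] // _;
  case Ey2: (G y2) (ri_convex_nNy HG y2) => [b2| |] //= _ [<-] [<-].
  have HFt := ri_convex_cvx HF t01 Ex1 Ey1; have HGt := ri_convex_cvx HG t01 Ex2 Ey2.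
  apply: le_trans (leeD HFt HGt) _; rewrite -EFinD lee_fin; by rewrite !mulrDr addrACA.
- by rewrite /= adde_eq_ninfty negb_or (ri_convex_nNy HF) (ri_convex_nNy HG).
- by apply: lte_add_pinfty; [case: HF|case: HG].
- move=> Hv; have /andP[Fv Gv] : (F v1 < +oo)%E && (G v2 < +oo)%E.
    by rewrite !ltey -adde_Neq_pinfty ?(ri_convex_nNy HF) ?(ri_convex_nNy HG) // -ltey.
  have [e1 e10 He1] := ri_convex_ext HF Fv; have [e2 e20 He2] := ri_convex_ext HG Gv.
  exists (Num.min e1 e2); first by rewrite lt_min e10 e20.
  move=> e' /andP[e'0]; rewrite le_min => /andP[e'1 e'2].
  by apply: lte_add_pinfty; [apply: He1|apply: He2]; rewrite e'0.
Qed.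

End ProductSpace.

(** * Epigraph models *)

Lemma InP (T : eqType) (x : T) (s : seq T) : reflect (List.In x s) (x \in s).
Proof.
elim: s => [|y s IH] /=; first by constructor.
rewrite inE; apply: (iffP orP) => [[/eqP ->|/IH]|[->|/IH]];
  [by left|by right|by left|by right].
Qed.

Section DotProduct.
Variables (R : realType) (d : nat).
Implicit Types (u v : 'cV[R]_d).

Lemma dotvC u v : dotv u v = dotv v u.
Proof. by apply: eq_bigr => i _; rewrite mulrC. Qed.

Lemma dotv0l v : dotv 0 v = 0.
Proof. by rewrite /dotv big1 // => i _; rewrite mxE mul0r. Qed.

Lemma dotv0r u : dotv u 0 = 0.
Proof. by rewrite dotvC dotv0l. Qed.

Lemma dotvDl u1 u2 v : dotv (u1 + u2) v = dotv u1 v + dotv u2 v.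
Proof. by rewrite /dotv -big_split; apply: eq_bigr => i _; rewrite !mxE mulrDl. Qed.

Lemma dotvNl u v : dotv (- u) v = - dotv u v.
Proof. by rewrite /dotv -sumrN; apply: eq_bigr => i _; rewrite !mxE mulNr. Qed.

Lemma dotvZl a u v : dotv (a *: u) v = a * dotv u v.
Proof. by rewrite /dotv mulr_sumr; apply: eq_bigr => i _; rewrite !mxE mulrA. Qed.

Lemma dotvDr u v1 v2 : dotv u (v1 + v2) = dotv u v1 + dotv u v2.
Proof. by rewrite dotvC dotvDl !(dotvC u). Qed.

Lemma dotvNr u v : dotv u (- v) = - dotv u v.
Proof. by rewrite dotvC dotvNl dotvC. Qed.

Lemma dotvZr a u v : dotv u (a *: v) = a * dotv u v.
Proof. by rewrite dotvC dotvZl dotvC. Qed.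

Lemma dotvBr u v1 v2 : dotv u (v1 - v2) = dotv u v1 - dotv u v2.
Proof. by rewrite dotvDr dotvNr. Qed.

Lemma dotv_delta k v : dotv (delta_mx k 0) v = v k 0.
Proof.
rewrite /dotv (bigD1 k) //= big1 => [|i /negbTE ik]; last by rewrite mxE ik mul0r.
by rewrite mxE !eqxx mul1r addr0.
Qed.

Lemma dotvv_ge0 v : 0 <= dotv v v.
Proof. by rewrite sumr_ge0 // => i _; rewrite -expr2 sqr_ge0. Qed.

Lemma dotv_trmx e (M : 'M[R]_(e, d)) (y : 'cV[R]_e) v :
  dotv (M^T *m y) v = dotv y (M *m v).
Proof.
rewrite /dotv; under eq_bigr do rewrite !mxE big_distrl /=.
rewrite exchange_big; apply: eq_bigr => j _; rewrite !mxE big_distrr /=.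
by apply: eq_bigr => i _; rewrite !mxE mulrCA mulrA.
Qed.

End DotProduct.

Section EpigraphModel.
Variables (R : realType) (d : nat).
Implicit Types (f : 'cV[R]_d -> \bar R) (x : 'cV[R]_d).

Definition epi_cmb (t : R) (w1 w2 : 'cV[R]_d * R) : 'cV[R]_d * R :=
  ((1 - t) *: w1.1 + t *: w2.1, (1 - t) * w1.2 + t * w2.2).

(* The common form of both qualification hypotheses; for a polyhedral [f],
   [F] is the height [t] on the epigraph cut out by [C]. *)
Record epi_model f x0 (F : 'cV[R]_d * R -> \bar R) (C : seq ('cV[R]_d * R -> R)) :
    Prop := EpiModel {
  epi_model_affine : all_affine epi_cmb C;
  epi_model_le : forall x t, feasible [::] C (x, t) -> (f x <= F (x, t))%E;
  epi_model_ge : forall x, (f x < +oo)%E ->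
    exists t, feasible [::] C (x, t) /\ (F (x, t) <= f x)%E;
  epi_model_ri : exists t0, ri_convex epi_cmb F (x0, t0) /\ feasible [::] C (x0, t0) }.

Lemma rel_int_extend (D : set 'cV[R]_d) x0 x : rel_int D x0 -> D x ->
  exists2 e : R, 0 < e & forall e', 0 < e' <= e -> D ((1 + e') *: x0 - e' *: x).
Proof.
case=> Dx0 [r r0 Hr] Dx; pose q := dotv (x0 - x) (x0 - x).
have q0 : 0 <= q := dotvv_ge0 _.
have r2 : 0 < r ^+ 2 by rewrite exprn_gt0.
have den : 0 < r ^+ 2 + q + 1 by rewrite -addrA addr_gt0 // ltr_pwDr.
(* [e' <= r^2 / (r^2 + q + 1)] forces [e' < 1] and [e' * q < r^2]. *)
exists (r ^+ 2 / (r ^+ 2 + q + 1)); first by rewrite divr_gt0.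
move=> e' /andP[e'0]; rewrite ler_pdivlMr // => e'r.
apply: Hr.
  exists 2%N, (fun i : 'I_2 => if i == ord0 then 1 + e' else - e'),
    (fun i : 'I_2 => if i == ord0 then x0 else x).
  split; first by move=> i; case: ifP.
    by rewrite big_ord_recl big_ord1 /= addrK.
  by rewrite big_ord_recl big_ord1 /= scaleNr.
rewrite (_ : _ - x0 = e' *: (x0 - x)); last by apply/matrixP => i j; rewrite !mxE; ring.
rewrite dotvZl dotvZr -/q.
have e'1 : e' < 1 by nra.
by nra.
Qed.

Lemma epi_model_ri_dom f x0 : convex_efun f -> (forall x, f x != -oo%E) ->
  rel_int (edom f) x0 -> epi_model f x0 (fun w => f w.1) [::].
Proof.
move=> cvx nNy ri; split=> [c []|x t _ //|x fx|]; first by exists 0.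
exists 0; split=> //; split=> [t [x a] [y b] u v t01 /= fx fy|w||[x t] /= fx].
- by have := cvx x y t t01; rewrite fx fy -!EFinM -EFinD.
- exact: nNy.
- by case: ri.
- have [e e0 He] := rel_int_extend ri fx; exists e => // e' /He.
  by rewrite opprK scaleNr.
Qed.

Definition polyhedral_cons k (M : 'M[R]_(k, d)) (e c : 'cV[R]_k) :
    seq ('cV[R]_d * R -> R) :=
  [seq (fun w => (M *m w.1) i 0 + e i 0 * w.2 - c i 0) | i <- enum 'I_k].

Lemma feasible_polyhedral_cons k (M : 'M[R]_(k, d)) (e c : 'cV[R]_k) x t :
  feasible [::] (polyhedral_cons M e c) (x, t) <->
  forall i, (M *m x) i 0 + e i 0 * t <= c i 0.
Proof.
split=> [[_ Fx] i|Hx].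
  have : List.In (fun w : 'cV[R]_d * R => (M *m w.1) i 0 + e i 0 * w.2 - c i 0)
    (polyhedral_cons M e c) by apply: List.in_map; apply/InP; rewrite mem_enum.
  by move/Fx; rewrite subr_le0.
by split=> // _ /List.in_map_iff[i [<- _]]; rewrite /= subr_le0.
Qed.

Lemma epi_model_polyhedral f x0 : polyhedral_fun f -> (forall x, f x != -oo%E) ->
  edom f x0 -> exists C, epi_model f x0 (fun w => (w.2)%:E) C.
Proof.
move=> [k [M [e [c epiE]]]] nNy fx0.
have fxE x : (f x < +oo)%E -> (fine (f x))%:E = f x by have := nNy x; case: (f x).
exists (polyhedral_cons M e c); split.
- move=> _ /List.in_map_iff[i [<- _]] t [x a] [y b] /=.
  by rewrite mulmxDr -!scalemxAr !mxE; ring.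
- by move=> x t /feasible_polyhedral_cons/epiE.
- move=> x fx; exists (fine (f x)).
  by split; [apply/feasible_polyhedral_cons/epiE|]; rewrite /= fxE.
exists (fine (f x0)); split; last by apply/feasible_polyhedral_cons/epiE; rewrite fxE.
split=> [t [x a] [y b] u v t01 /= [<-] [<-] //|//|/=|w _]; first exact: ltry.
by exists 1 => // e' _; exact: ltry.
Qed.

Lemma epi_model_exists f x0 : convex_efun f -> (forall x, f x != -oo%E) ->
  rel_int (edom f) x0 \/ (polyhedral_fun f /\ edom f x0) ->
  exists F C, epi_model f x0 F C.
Proof.
move=> cvx nNy [ri|[poly fx0]].
  by exists (fun w => f w.1), [::]; apply: epi_model_ri_dom.
by have [C HC] := epi_model_polyhedral poly nNy fx0; exists (fun w => (w.2)%:E), C.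
Qed.

End EpigraphModel.

(** * The primal problem and its dual *)

Section PrimalMultipliers.
Variables (R : realType) (n m r : nat).
Variables (f : 'cV[R]_n -> \bar R) (g : 'cV[R]_m -> \bar R).
Variables (A : 'M[R]_(m, n)) (B : 'M[R]_(r, n)) (b : 'cV[R]_r).
Hypotheses (f_nNy : forall x, f x != -oo%E) (g_nNy : forall u, g u != -oo%E).

Local Notation W := (('cV[R]_n * R) * ('cV[R]_m * R))%type.
Local Notation W_cmb := (pair_cmb (@epi_cmb R n) (@epi_cmb R m)).

Definition feasible_on (S : {set 'I_r}) (x : 'cV[R]_n) :=
  forall i, i \in S -> (B *m x) i 0 <= b i 0.

Definition lagrangian_bound (p : R) (y : 'cV[R]_m) (z : 'cV[R]_r) :=
  forall x u, (p%:E <= f x + g u + (dotv y (A *m x - u) + dotv z (B *m x - b))%:E)%E.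

Definition link_cons : seq (W -> R) :=
  [seq (fun w : W => (A *m w.1.1) k 0 - w.2.1 k 0) | k <- enum 'I_m].

Definition ineq_cons (S : {set 'I_r}) (C : seq ('cV[R]_n * R -> R))
    (D : seq ('cV[R]_m * R -> R)) : seq (W -> R) :=
  [seq (fun w : W => (B *m w.1.1) i 0 - b i 0) | i <- enum S] ++
  [seq (fun w => c w.1) | c <- C] ++ [seq (fun w => c w.2) | c <- D].

Lemma all_affine_link : all_affine W_cmb link_cons.
Proof.
move=> _ /List.in_map_iff[k [<- _]] t [[x a] [u c]] [[x' a'] [u' c']] /=.
by rewrite mulmxDr -!scalemxAr !mxE; ring.
Qed.

Lemma all_affine_ineq S C D : all_affine (@epi_cmb R n) C -> all_affine (@epi_cmb R m) D ->
  all_affine W_cmb (ineq_cons S C D).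
Proof.
move=> HC HD c /List.in_app_iff[|/List.in_app_iff[]] /List.in_map_iff[c' [<- Hc']].
- move=> t [[x a] [u e]] [[x' a'] [u' e']] /=.
  by rewrite mulmxDr -!scalemxAr !mxE; ring.
- exact/affine_fun_fst/HC.
- exact/affine_fun_snd/HD.
Qed.

Lemma feasible_primal S C D x t u s :
  feasible link_cons (ineq_cons S C D) ((x, t), (u, s)) <->
  [/\ u = A *m x, feasible_on S x, feasible [::] C (x, t) & feasible [::] D (u, s)].
Proof.
split=> [[FE FS]|[-> FB [_ FC] [_ FD]]].
  split.
  - apply/matrixP => k j; rewrite (ord1 j); apply/eqP; rewrite eq_sym -subr_eq0.
    have Hk : List.In k (enum 'I_m) by apply/InP; rewrite mem_enum.
    apply/eqP; apply: FE _ (List.in_map _ _ k Hk).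
  - move=> i iS; rewrite -subr_le0.
    apply: (FS (fun w : W => (B *m w.1.1) i 0 - b i 0)).
    by apply/List.in_or_app; left; apply: List.in_map; apply/InP; rewrite mem_enum.
  - split=> // c Hc; apply: (FS (fun w : W => c w.1)).
    by apply/List.in_or_app; right; apply/List.in_or_app; left; apply: List.in_map.
  - split=> // c Hc; apply: (FS (fun w : W => c w.2)).
    by apply/List.in_or_app; right; apply/List.in_or_app; right; apply: List.in_map.
split=> [_ /List.in_map_iff[k [<- _]]|c]; first exact: subrr.
case/List.in_app_iff=> [|/List.in_app_iff[]] /List.in_map_iff[c' [<- Hc']] /=.
- by rewrite subr_le0; apply: FB; move/InP: Hc'; rewrite mem_enum.
- exact: FC.
- exact: FD.
Qed.

Lemma lagrange_comb_primal S C D h :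
  lagrange_comb link_cons (ineq_cons S C D) h ->
  exists (y : 'cV[R]_m) (z : 'cV[R]_r) (hf : 'cV[R]_n * R -> R) (hg : 'cV[R]_m * R -> R),
    [/\ forall i, 0 <= z i 0, forall i, i \notin S -> z i 0 = 0,
    forall v, feasible [::] C v -> hf v <= 0, forall v, feasible [::] D v -> hg v <= 0 &
    forall w : W, h w = dotv y (A *m w.1.1 - w.2.1) + dotv z (B *m w.1.1 - b)
                        + hf w.1 + hg w.2].
Proof.
elim=> [|c a h' Hc _ [y [z [hf [hg [z0 zS Hf Hg Hh]]]]]
        |c a h' Hc a0 _ [y [z [hf [hg [z0 zS Hf Hg Hh]]]]]].
- exists 0, 0, (fun _ => 0), (fun _ => 0); split=> // [i|i _|w]; rewrite ?mxE //.
  by rewrite !dotv0l !addr0.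
- case/List.in_map_iff: Hc => k [<- _].
  exists (y + a *: delta_mx k 0), z, hf, hg; split=> // w.
  by rewrite Hh dotvDl dotvZl dotv_delta !mxE; ring.
case/List.in_app_iff: Hc => [|/List.in_app_iff[]] /List.in_map_iff[c' [<- Hc']].
- exists y, (z + a *: delta_mx c' 0), hf, hg; split=> // [i|i iS|w].
  + by rewrite !mxE addr_ge0 // mulr_ge0.
  + rewrite !mxE zS // (_ : i == c' = false) ?mulr0 ?addr0 //.
    by apply: contraNF iS => /eqP ->; move/InP: Hc'; rewrite mem_enum.
  + by rewrite Hh dotvDl dotvZl dotv_delta !mxE; ring.
- exists y, z, (fun v => a * c' v + hf v), hg; split=> // [v Fv|w].
    by have := Hf v Fv; have := (proj2 Fv) c' Hc'; nra.
  by rewrite Hh /=; ring.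
- exists y, z, hf, (fun v => a * c' v + hg v); split=> // [v Fv|w].
    by have := Hg v Fv; have := (proj2 Fv) c' Hc'; nra.
  by rewrite Hh /=; ring.
Qed.

Theorem lagrange_multipliers_primal S F C G D x0 p :
  epi_model f x0 F C -> epi_model g (A *m x0) G D ->
  (forall i, (B *m x0) i 0 <= b i 0) ->
  (forall x, feasible_on S x -> (p%:E <= f x + g (A *m x))%E) ->
  exists (y : 'cV[R]_m) (z : 'cV[R]_r),
    [/\ forall i, 0 <= z i 0, forall i, i \notin S -> z i 0 = 0 & lagrangian_bound p y z].
Proof.
move=> [HC leF geF [t0 [riF Ft0]]] [HD leG geG [s0 [riG Gs0]]] Bx0 Hp.
have [||h /lagrange_comb_primal[y [z [hf [hg [z0 zS Hf Hg Hh]]]]] Hph] :=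
  has_multipliers_affine all_affine_link (all_affine_ineq (S := S) HC HD)
    (ri_convex_pair riF riG) _ (p := p).
- by apply/feasible_primal; split=> // i _.
- move=> [[x t] [u s]] /feasible_primal[-> FS FC FD].
  exact: le_trans (Hp x FS) (leeD (leF _ _ FC) (leG _ _ FD)).
exists y, z; split=> // x u.
case Efx: (f x) (f_nNy x) => [fx| |] // _; last by rewrite addye ?g_nNy // addye ?leey.
case Egu: (g u) (g_nNy u) => [gu| |] // _; last by rewrite addey // addye ?leey.
have [t [FC Ft]] : exists t, feasible [::] C (x, t) /\ (F (x, t) <= f x)%E.
  by apply: geF; rewrite Efx ltry.
have [s [FD Gs]] : exists s, feasible [::] D (u, s) /\ (G (u, s) <= g u)%E.
  by apply: geG; rewrite Egu ltry.
have := Hph ((x, t), (u, s)); rewrite Hh /=.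
move: Ft Gs (Hf _ FC) (Hg _ FD); rewrite Efx Egu.
case: (F (x, t)) => [a| |] //; case: (G (u, s)) => [c| |] //.
by rewrite -!EFinD !lee_fin => ? ? ? ? ?; lra.
Qed.

End PrimalMultipliers.

Section Conjugate.
Variable R : realType.

Lemma conj_fun_ub d (f : 'cV[R]_d -> \bar R) q x :
  ((dotv q x)%:E - f x <= conj_fun f q)%E.
Proof. by apply: ereal_sup_ubound; exists x. Qed.

Lemma conj_fun_nNy d (f : 'cV[R]_d -> \bar R) q x : (f x < +oo)%E -> conj_fun f q != -oo%E.
Proof.
move=> fx; rewrite -ltNye; apply: lt_le_trans (conj_fun_ub f q x).
by move: fx; case: (f x) => // v _; exact: ltNyr.
Qed.

Lemma conj_funD_le d1 d2 (f1 : 'cV[R]_d1 -> \bar R) (f2 : 'cV[R]_d2 -> \bar R) q1 q2 x1 x2 a :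
  (forall x, f2 x != -oo%E) -> (f1 x1 < +oo)%E -> (f2 x2 < +oo)%E ->
  (forall x x', ((dotv q1 x)%:E - f1 x + ((dotv q2 x')%:E - f2 x') <= a%:E)%E) ->
  (conj_fun f1 q1 + conj_fun f2 q2 <= a%:E)%E.
Proof.
move=> nNy2 fx1 fx2 Ha.
have fin2 x : (f2 x < +oo)%E -> ((dotv q2 x)%:E - f2 x)%E = (dotv q2 x - fine (f2 x))%:E.
  by have := nNy2 x; case: (f2 x).
have c1_le x' : (f2 x' < +oo)%E ->
    (conj_fun f1 q1 <= (a - (dotv q2 x' - fine (f2 x')))%R%:E)%E.
  move=> fx'; apply: ge_ereal_sup => _ [x _ <-].
  have := Ha x x'; rewrite fin2 //; case: ((dotv q1 x)%:E - f1 x)%E => [v| |] //=.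
    by rewrite !lee_fin lerBrDr.
  by move=> _; exact: leNye.
have [al Eal] : exists al, conj_fun f1 q1 = al%:E.
  move: (conj_fun_nNy q1 fx1) (c1_le _ fx2).
  by case: (conj_fun f1 q1) => [al| |] // _ _; exists al.
have c2_le : (conj_fun f2 q2 <= (a - al)%R%:E)%E.
  apply: ge_ereal_sup => _ [x' _ <-].
  have [fx'|] := ltP (f2 x') +oo%E; last by rewrite leye_eq => /eqP ->; rewrite /= leNye.
  by have := c1_le _ fx'; rewrite Eal fin2 // !lee_fin => ?; lra.
by rewrite Eal; apply: le_trans (leeD (lexx _) c2_le) _; rewrite -EFinD addrC subrK.
Qed.

End Conjugate.

Definition col_supp (R : realType) r (z : 'cV[R]_r) : {set 'I_r} := [set i | z i 0 != 0].

Lemma Psi_plus_supp (R : realType) r (mu z : 'cV[R]_r) : (forall i, 0 <= z i 0) ->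
  Psi_plus mu z = (\sum_(i in col_supp z) mu i 0)%:E.
Proof.
move=> z0; rewrite /Psi_plus /ind_nonneg asboolT // adde0.
by congr _%:E; rewrite [RHS]big_mkcond; apply: eq_bigr => i _; rewrite inE.
Qed.

Lemma Psi_plus_pinfty (R : realType) r (mu z : 'cV[R]_r) : ~ (forall i, 0 <= z i 0) ->
  Psi_plus mu z = +oo%E.
Proof. by move=> z0; rewrite /Psi_plus /ind_nonneg asboolF. Qed.

Section Duality.
Variables (R : realType) (n m r : nat).
Variables (f : 'cV[R]_n -> \bar R) (g : 'cV[R]_m -> \bar R).
Variables (A : 'M[R]_(m, n)) (B : 'M[R]_(r, n)) (b : 'cV[R]_r).
Hypotheses (f_nNy : forall x, f x != -oo%E) (g_nNy : forall u, g u != -oo%E).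
Variables (c0 : R) (x0 : 'cV[R]_n).
Hypothesis primal_lb : forall x, (c0%:E <= f x + g (A *m x))%E.
Hypotheses (fx0 : (f x0 < +oo)%E) (gx0 : (g (A *m x0) < +oo)%E).
Hypothesis Bx0 : forall i, (B *m x0) i 0 <= b i 0.

Local Notation dual := (Xi f g A B b).

Definition primal_values (S : {set 'I_r}) : set R :=
  [set v | exists x, feasible_on B b S x /\ (f x + g (A *m x))%E = v%:E].

Definition primal_inf S := inf (primal_values S).

Lemma primal_inf_lb S x : feasible_on B b S x ->
  ((primal_inf S)%:E <= f x + g (A *m x))%E.
Proof.
move=> Fx; case Ev: (f x + g (A *m x))%E (primal_lb x) => [v| |] lbx; last 2 first.
- exact: leey.
- by move: lbx; rewrite leeNy_eq.
rewrite lee_fin; apply: ge_inf; last by exists x.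
by exists c0 => w [x' [_ Ew]]; rewrite -lee_fin -Ew.
Qed.

Lemma primal_inf_glb S a : (forall x, feasible_on B b S x -> (a%:E <= f x + g (A *m x))%E) ->
  a <= primal_inf S.
Proof.
move=> Ha; apply: lb_le_inf => [|w [x [Fx Ew]]]; last by rewrite -lee_fin -Ew; apply: Ha.
move: fx0 gx0 (f_nNy x0) (g_nNy (A *m x0)).
case Ef: (f x0) => // [u]; case Eg: (g (A *m x0)) => // [v] _ _ _ _.
by exists (u + v), x0; split=> [i _|]; [apply: Bx0|rewrite Ef Eg].
Qed.

Lemma lagrangian_identity y z x u :
  dotv (- (A^T *m y) - B^T *m z) x + dotv y u + dotv b z =
  - (dotv y (A *m x - u) + dotv z (B *m x - b)).
Proof. by rewrite dotvDl !dotvNl !dotv_trmx !dotvBr (dotvC b z); ring. Qed.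

Lemma Xi_nNy y z : dual y z != -oo%E.
Proof. by rewrite !adde_eq_ninfty !negb_or (conj_fun_nNy _ fx0) (conj_fun_nNy _ gx0). Qed.

Lemma Xi_le_lagrangian p y z : lagrangian_bound f g A B b p y z -> (dual y z <= (- p)%:E)%E.
Proof.
move=> Hl; apply: le_trans (leeD (conj_funD_le (a := - p - dotv b z) g_nNy fx0 gx0 _)
  (lexx (dotv b z)%:E)) _; last by rewrite -EFinD subrK.
move=> x u; have := Hl x u; have := lagrangian_identity y z x u.
case: (f x) (f_nNy x) => [a| |] // _; case: (g u) (g_nNy u) => [c| |] //= _ Hid;
  rewrite ?leNye //.
by rewrite -!EFinD !lee_fin; lra.
Qed.

Lemma Xi_ge_primal (y : 'cV[R]_m) (z : 'cV[R]_r) x :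
  (forall i, 0 <= z i 0) -> feasible_on B b (col_supp z) x ->
  (- (f x + g (A *m x)) <= dual y z)%E.
Proof.
move=> z0 Fx; apply: le_trans (leeD (leeD (conj_fun_ub f _ x) (conj_fun_ub g y (A *m x)))
  (lexx (dotv b z)%:E)).
have zB : dotv z (B *m x - b) <= 0.
  rewrite -oppr_ge0 -dotvNr opprB sumr_ge0 // => i _.
  have [->|zi] := eqVneq (z i 0) 0; first by rewrite mul0r.
  by rewrite mulr_ge0 // 2!mxE subr_ge0; apply: Fx; rewrite inE.
have := lagrangian_identity y z x (A *m x).
rewrite subrr dotv0r add0r => Hid.
case: (f x) (f_nNy x) => [a| |] // _; case: (g (A *m x)) (g_nNy (A *m x)) => [c| |] //= _.
by rewrite -!EFinD lee_fin; lra.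
Qed.

Lemma Xi_ge_primal_inf y (z : 'cV[R]_r) : (forall i, 0 <= z i 0) ->
  ((- primal_inf (col_supp z))%:E <= dual y z)%E.
Proof.
move=> z0; case Ed: (dual y z) (Xi_nNy y z) => [v| |] // _; last by rewrite leey.
rewrite lee_fin lerNl; apply: primal_inf_glb => x Fx.
by rewrite EFinN leeNl -Ed; apply: Xi_ge_primal.
Qed.

Variable mu : 'cV[R]_r.
Hypothesis mu_ge0 : forall i, 0 <= mu i 0.

Definition subset_value (S : {set 'I_r}) := - primal_inf S + \sum_(i in S) mu i 0.

Lemma subset_value_le_dual y (z : 'cV[R]_r) :
  exists S, ((subset_value S)%:E <= dual y z + Psi_plus mu z)%E.
Proof.
exists (col_supp z); have [z0|z0] := pselect (forall i, 0 <= z i 0).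
  by rewrite Psi_plus_supp // EFinD leeD2r // Xi_ge_primal_inf.
by rewrite Psi_plus_pinfty // addey ?Xi_nNy // leey.
Qed.

Lemma dual_le_subset_value (S : {set 'I_r}) y (z : 'cV[R]_r) : (forall i, 0 <= z i 0) ->
  (forall i, i \notin S -> z i 0 = 0) -> lagrangian_bound f g A B b (primal_inf S) y z ->
  (dual y z + Psi_plus mu z <= (subset_value S)%:E)%E.
Proof.
move=> z0 zS Hl; rewrite Psi_plus_supp // EFinD.
apply: leeD (Xi_le_lagrangian Hl) _; rewrite lee_fin !(big_mkcond (fun i => i \in _)) /=.
apply: ler_sum => i _; rewrite inE; case: ifP => [|_]; last by case: ifP.
by case: ifP => // /negbT /zS ->; rewrite eqxx.
Qed.

End Duality.

Theorem mainTheorem5 (R : realType) (n m r : nat)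
  (f : 'cV[R]_n -> \bar R) (g : 'cV[R]_m -> \bar R)
  (A : 'M[R]_(m, n)) (B : 'M[R]_(r, n)) (b : 'cV[R]_r) :
  plsc_convex f -> plsc_convex g ->
  (exists c : R, forall x : 'cV[R]_n, (c%:E <= f x + g (A *m x))%E) ->
  (exists x : 'cV[R]_n,
     [/\ rel_int (edom f) x \/ (polyhedral_fun f /\ edom f x),
         rel_int (edom g) (A *m x) \/ (polyhedral_fun g /\ edom g (A *m x))
       & forall i, (B *m x) i 0 <= b i 0]) ->
  forall mu : 'cV[R]_r, (forall i, 0 < mu i 0) ->
    exists (y0 : 'cV[R]_m) (z0 : 'cV[R]_r),
      forall (y : 'cV[R]_m) (z : 'cV[R]_r),
        (Xi f g A B b y0 z0 + Psi_plus mu z0 <= Xi f g A B b y z + Psi_plus mu z)%E.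
Proof.
move=> [[f_nNy _] _ f_cvx] [[g_nNy _] _ g_cvx] [c lb] [x0 [f_qual g_qual Bx0]] mu mu_gt0.
have fx0 : edom f x0 by case: f_qual => [[]|[]].
have gx0 : edom g (A *m x0) by case: g_qual => [[]|[]].
have mu_ge0 i : 0 <= mu i 0 by apply: ltW.
have [F [C HF]] := epi_model_exists f_cvx f_nNy f_qual.
have [G [D HG]] := epi_model_exists g_cvx g_nNy g_qual.
pose value := subset_value f g A B b mu.
have [S0 _ S0_min] := @arg_minP _ R {set 'I_r} [set: 'I_r]%SET xpredT value isT.
have [y [z [z_ge0 z_supp Hl]]] := lagrange_multipliers_primal f_nNy g_nNy HF HG Bx0
  (primal_inf_lb lb (S := S0)).
exists y, z => y' z'.
have [S HS] := subset_value_le_dual f_nNy g_nNy fx0 gx0 Bx0 mu y' z'.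
apply: le_trans (dual_le_subset_value f_nNy g_nNy fx0 gx0 mu_ge0 z_ge0 z_supp Hl) _.
by apply: le_trans HS; rewrite lee_fin S0_min.
Qed.
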